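(* Let $\mathit{VI}$ be a finite set of variables with $\#\mathit{VI}=n$ and $1\le k\le n$. For each $sh\in\mathit{SH}$ and each $V\in\wp(\mathit{VI})$, $\rho_{\mathit{TSD}_k}(sh)\setminus\mathrm{rel}(V,\rho_{\mathit{TSD}_k}(sh))=\rho_{\mathit{TSD}_k}(sh\setminus\mathrm{rel}(V,sh))$.
   Context: $\mathit{SG}=\wp(\mathit{VI})\setminus\{\emptyset\}$, $\mathit{SH}=\wp(\mathit{SG})$. $\rho_{\mathit{TSD}_k}(sh)=\{\,S\in\mathit{SG}\mid \forall T\subseteq S:\ \#T<k\implies S=\bigcup\{U\in sh\mid T\subseteq U\subseteq S\}\,\}$. $\mathrm{rel}(V,sh)=\{S\in sh\mid S\cap V\ne\emptyset\}$. *)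

From mathcomp Require Import all_boot.
Set Implicit Arguments. Unset Strict Implicit. Unset Printing Implicit Defensive.

(* Variables VI are modelled by a finite type T; SG = nonempty subsets of T,
   SH = sets of elements of SG, i.e. sh : {set {set T}} with set0 \notin sh. *)

Definition SG (T : finType) : {set {set T}} := [set S : {set T} | S != set0].

Definition is_SH (T : finType) (sh : {set {set T}}) : Prop := sh \subset SG T.

Definition rho_TSD (T : finType) (k : nat) (sh : {set {set T}}) : {set {set T}} :=
  [set S in SG T | [forall T' : {set T},
     ((T' \subset S) && (#|T'| < k)) ==>
       (S == \bigcup_(U in sh | (T' \subset U) && (U \subset S)) U)]].

Definition relV (T : finType) (V : {set T}) (sh : {set {set T}}) : {set {set T}} :=
  [set S in sh | S :&: V != set0].

From mathcomp Require Import all_boot.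
Set Implicit Arguments. Unset Strict Implicit.

(* Membership of S in rho_TSD k sh only depends on the elements of sh below S.
   If S misses V, no such element is in rel(V, sh), so removing rel(V, sh)
   does not change membership of S.  If S meets V, S is not in the right-hand
   side: for k >= 1 the condition at T' = {} makes S the union of elements of
   sh \ rel(V, sh), all of which miss V. *)

Lemma rho_TSD_local (T : finType) (k : nat) (sh1 sh2 : {set {set T}}) (S : {set T}) :
  (forall U : {set T}, U \subset S -> (U \in sh1) = (U \in sh2)) ->
  (S \in rho_TSD k sh1) = (S \in rho_TSD k sh2).
Proof.
move=> sh12; rewrite !inE; congr (_ && _); apply: eq_forallb => T'.
congr (_ ==> (S == _)); apply: eq_bigl => U.
by case US: (U \subset S); rewrite ?andbF // andbT sh12.
Qed.

Lemma rho_TSD_sub_cover (T : finType) (k : nat) (sh : {set {set T}}) (S : {set T}) :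
  0 < k -> S \in rho_TSD k sh -> S \subset cover sh.
Proof.
move=> k_gt0; rewrite inE => /andP [_ /forallP /(_ set0)].
rewrite sub0set cards0 k_gt0 /= => /eqP ->.
by apply/bigcupsP => U /andP [shU _]; apply: bigcup_sup.
Qed.

Lemma cover_setD_relV (T : finType) (V : {set T}) (sh : {set {set T}}) :
  cover (sh :\: relV V sh) :&: V = set0.
Proof.
apply/eqP; rewrite -subset0 setIC; apply/subsetP => x /setIP [xV].
case/bigcupP => U; rewrite !inE => /andP [UV shU] xU.
move: UV; rewrite shU /= negbK => /eqP UV.
have : x \in U :&: V by rewrite inE xU xV.
by rewrite UV inE.
Qed.

Lemma setD_relV_below (T : finType) (V : {set T}) (sh : {set {set T}}) (S U : {set T}) :
  S :&: V = set0 -> U \subset S -> (U \in sh :\: relV V sh) = (U \in sh).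
Proof.
move=> SV US; rewrite !inE andbC; case: (U \in sh) => //=.
by rewrite negbK -subset0 -SV setSI.
Qed.

Theorem lemma3p18 (T : finType) (n k : nat) (sh : {set {set T}}) (V : {set T}) :
  #|T| = n -> 1 <= k <= n -> is_SH sh ->
  rho_TSD k sh :\: relV V (rho_TSD k sh) = rho_TSD k (sh :\: relV V sh).
Proof.
move=> _ /andP [k_gt0 _] _; apply/setP => S.
rewrite inE [S \in relV _ _]inE.
have [SV | SV] := eqVneq (S :&: V) set0.
  rewrite andbF /=; apply: rho_TSD_local => U US.
  by rewrite (setD_relV_below sh SV US).
rewrite andbT andNb; apply/esym/negbTE/negP => /(rho_TSD_sub_cover k_gt0) Scov.
by move: SV; rewrite -subset0 -(cover_setD_relV V sh) setSI.
Qed.
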